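(* Let $r,n\geq1$ and let $\mathcal{P}^{\subset}_{r,n}$ be the set of nested $r$-partitions of $n$. Define $$\phi_0:\mathcal{P}^{\subset}_{r,n}\to(\mathbb{Z}^2)^{\times n}/\mathcal{S}_n,\qquad \phi_0(\mu)=\big[(i(s)-a,\ j(s)-a)\big]_{1\leq a\leq r,\ s\in\mu_a},$$ the unordered $n$-tuple (multiset) of these points. Then $\phi_0$ is injective.
   Context: A partition $\nu=(\nu^1\geq\cdots\geq\nu^l)$ is identified with the set of integral points $\{(i,j)\in\mathbb{Z}^2: 1\leq i\leq l,\ 1\leq j\leq\nu^i\}$. For a box $s=(i,j)$ write $i(s)=i$ and $j(s)=j$. An $r$-partition of $n$ is a tuple $\mu=(\mu_1,\dots,\mu_r)$ of partitions with $\sum_a|\mu_a|=n$. It is nested if $\mu_r\subseteq\mu_{r-1}\subseteq\cdots\subseteq\mu_1$ as subsets of $\mathbb{Z}^2$. The symmetric group $\mathcal{S}_n$ acts on $(\mathbb{Z}^2)^{\times n}$ by permuting the factors. *)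

From mathcomp Require Import all_boot all_order all_algebra.
Set Implicit Arguments. Unset Strict Implicit. Unset Printing Implicit Defensive.

Definition is_partition (p : seq nat) : bool :=
  sorted geq p && all (fun x => 0 < x) p.

Definition psize (p : seq nat) : nat := sumn p.

Definition boxes (p : seq nat) : seq (nat * nat) :=
  [seq (i.+1, j.+1) | i <- iota 0 (size p), j <- iota 0 (nth 0 p i)].

(* An r-partition of n: an r-tuple (mu_1,...,mu_r) (stored as a list of
   length r; mu_a is the entry at index a-1) of partitions, sizes summing to n. *)
Definition is_rpartition (r n : nat) (mu : seq (seq nat)) : Prop :=
  size mu = r /\ all is_partition mu /\ sumn (map psize mu) = n.

Definition is_nested (mu : seq (seq nat)) : Prop :=
  forall a, a.+1 < size mu ->
    {subset boxes (nth [::] mu a.+1) <= boxes (nth [::] mu a)}.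

Definition nested_rpartition (r n : nat) (mu : seq (seq nat)) : Prop :=
  is_rpartition r n mu /\ is_nested mu.

(* phi_0(mu) : the n-tuple of points (i(s) - a, j(s) - a), 1 <= a <= r, s in mu_a;
   as an element of (Z^2)^n / S_n it is this list up to permutation (perm_eq). *)
Definition phi0 (mu : seq (seq nat)) : seq (int * int) :=
  flatten [seq [seq ((Posz s.1 - Posz a.+1)%R, (Posz s.2 - Posz a.+1)%R)
               | s <- boxes (nth [::] mu a)] | a <- iota 0 (size mu)].

From mathcomp Require Import all_boot all_order all_algebra zify.

Set Implicit Arguments.
Unset Strict Implicit.
Unset Printing Implicit Defensive.

Import Order.TTheory GRing.Theory.

(* The first component mu_1 can be read off the multiset phi0(mu): the box
   (i+1, j+1) lies in mu_1 iff some point of phi0(mu) lies on the diagonal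
   x - y = i - j with x >= i. Indeed a box s of mu_a contributes the point
   s - (a, a) on the diagonal of s, and since mu_a is contained in mu_1, which
   is closed under moving boxes towards the origin, any such point witnesses
   (i+1, j+1) in mu_1. Removing the contribution of mu_1 and shifting the rest
   by (1, 1) leaves phi0 of (mu_2, ..., mu_r), so induction on r concludes. *)

Lemma mem_boxes p s :
  (s \in boxes p) = [&& 0 < s.1, 0 < s.2 & s.2.-1 < nth 0 p s.1.-1].
Proof.
case: s => i j /=; apply/idP/idP.
  by case/flatten_mapP => i' _ /mapP [j' + [-> ->]]; rewrite mem_iota.
case/and3P; case: i => // i _; case: j => // j _ /= lt_j.
have lt_i : i < size p.
  by rewrite ltnNge; apply: contraL lt_j => /(nth_default 0) ->.
by apply/flatten_mapP; exists i; rewrite ?mem_iota //; apply: map_f; rewrite mem_iota.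
Qed.

Lemma mem_boxesS p i j : ((i.+1, j.+1) \in boxes p) = (j < nth 0 p i).
Proof. by rewrite mem_boxes. Qed.

Lemma partition_nth_geq p i i' :
  is_partition p -> i <= i' -> nth 0 p i' <= nth 0 p i.
Proof.
case/andP => sorted_p _ le_ii'.
have [lt_i'|ge_i'] := ltnP i' (size p); last by rewrite nth_default.
apply: (sorted_leq_nth (rev_trans leq_trans) leqnn) => //; rewrite inE.
exact: leq_ltn_trans le_ii' lt_i'.
Qed.

Lemma boxes_down p i j i' j' : is_partition p ->
  (i'.+1, j'.+1) \in boxes p -> i <= i' -> j <= j' -> (i.+1, j.+1) \in boxes p.
Proof.
rewrite !mem_boxesS => part_p lt_j' le_i le_j.
exact: leq_ltn_trans le_j (leq_trans lt_j' (partition_nth_geq part_p le_i)).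
Qed.

Lemma partition_boxes_inj p q : is_partition p -> is_partition q ->
  boxes p =i boxes q -> p = q.
Proof.
move=> part_p part_q eq_pq.
have eq_nth i : nth 0 p i = nth 0 q i.
  have lt_nth k : (k < nth 0 p i) = (k < nth 0 q i).
    by rewrite -mem_boxesS eq_pq mem_boxesS.
  apply/eqP; rewrite eqn_leq; apply/andP; split; rewrite leqNgt.
    by rewrite lt_nth ltnn.
  by rewrite -lt_nth ltnn.
have size_gt0 s : is_partition s -> forall i, (i < size s) = (0 < nth 0 s i).
  case/andP => _ /allP pos_s i; apply/idP/idP => [lt_i|]; first exact/pos_s/mem_nth.
  by apply: contraTT; rewrite -leqNgt => /(nth_default 0) ->.
apply: (eq_from_nth (x0 := 0)) => [|i _]; last exact: eq_nth.
apply/eqP; rewrite eqn_leq; apply/andP; split; rewrite leqNgt.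
  by rewrite (size_gt0 p) // eq_nth -size_gt0 // ltnn.
by rewrite (size_gt0 q) // -eq_nth -size_gt0 // ltnn.
Qed.

Definition diag_shift (z : int * int) : int * int := ((z.1 - 1)%R, (z.2 - 1)%R).

Lemma diag_shift_inj : injective diag_shift.
Proof. by case=> [x y] [x' y'] [] /= eq_x eq_y; congr pair; lia. Qed.

Lemma phi0_cons p mu : phi0 (p :: mu) =
  [seq ((Posz s.1 - 1)%R, (Posz s.2 - 1)%R) | s <- boxes p] ++ map diag_shift (phi0 mu).
Proof.
rewrite /phi0 /= -[1]/(1 + 0) iotaDl map_flatten -!map_comp; congr cat.
congr flatten; apply: eq_map => a /=; rewrite -map_comp.
by apply: eq_map => s /=; rewrite /diag_shift /=; congr pair; lia.
Qed.

Lemma nested_behead p mu : is_nested (p :: mu) -> is_nested mu.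
Proof. by move=> nested_pmu a; apply: (nested_pmu a.+1). Qed.

Lemma nested_sub_head mu a : is_nested mu -> a < size mu ->
  {subset boxes (nth [::] mu a) <= boxes (nth [::] mu 0)}.
Proof.
move=> nested_mu; elim: a => [|a IHa] lt_a // s /(nested_mu a lt_a).
by apply: IHa; apply: ltnW.
Qed.

Definition on_diag_beyond (i j : nat) (z : int * int) : bool :=
  (z.1 - z.2 == Posz i - Posz j)%R && (Posz i <= z.1)%R.

Lemma mem_boxes_head_phi0 p mu i j : is_partition p -> is_nested (p :: mu) ->
  ((i.+1, j.+1) \in boxes p) = has (on_diag_beyond i j) (phi0 (p :: mu)).
Proof.
move=> part_p nested_pmu; apply/idP/hasP => [ij_p|].
  exists (Posz i, Posz j); last by rewrite /on_diag_beyond /= eqxx lexx.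
  rewrite phi0_cons mem_cat; apply/orP; left.
  by apply/mapP; exists (i.+1, j.+1) => //=; congr pair; lia.
case=> z /flatten_mapP [a]; rewrite mem_iota add0n => lt_a /mapP [s s_a ->].
have := nested_sub_head nested_pmu lt_a s_a.
case: s {s_a} => [[|s1] [|s2]] s_p; try by rewrite mem_boxes in s_p.
rewrite /on_diag_beyond /= => /andP [/eqP diag le_i].
by apply: (boxes_down part_p s_p); lia.
Qed.

Lemma phi0_inj mu nu : size mu = size nu ->
  all is_partition mu -> all is_partition nu -> is_nested mu -> is_nested nu ->
  perm_eq (phi0 mu) (phi0 nu) -> mu = nu.
Proof.
elim: mu nu => [|p mu IHmu] [|q nu] //= [eq_size] /andP [part_p part_mu]
  /andP [part_q part_nu] nested_pmu nested_qnu perm_phi0.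
have eq_pq : p = q.
  apply: partition_boxes_inj => // -[[|i] [|j]]; try by rewrite !mem_boxes.
  rewrite (mem_boxes_head_phi0 _ _ part_p nested_pmu).
  rewrite (mem_boxes_head_phi0 _ _ part_q nested_qnu).
  exact/eq_has_r/perm_mem.
move: perm_phi0; rewrite -eq_pq !phi0_cons perm_cat2l.
move=> /(perm_map_inj diag_shift_inj) perm_tail.
have nested_mu := nested_behead nested_pmu.
have nested_nu := nested_behead nested_qnu.
by rewrite (IHmu nu).
Qed.

Theorem lemma6p6 (r n : nat) (hr : 1 <= r) (hn : 1 <= n)
  (mu nu : seq (seq nat)) :
  nested_rpartition r n mu -> nested_rpartition r n nu ->
  perm_eq (phi0 mu) (phi0 nu) -> mu = nu.
Proof.
move=> [[size_mu [part_mu _]] nested_mu] [[size_nu [part_nu _]] nested_nu].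
by apply: phi0_inj; rewrite ?size_mu ?size_nu.
Qed.
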